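(* Let $n\ge 2$ and $\mu\in[0,1-\frac1n]$, and let $P=(p_{ij})$ be an optimal solution of problem (P) (i.e. an $n\times n$ MICK) all of whose entries are strictly positive. For $i,j\in\{1,\dots,n-1\}$ put $$\eta_{ij}=p_{ij}+p_{i+1,j}+p_{i,j+1}+p_{i+1,j+1}.$$ Then the quantity (''pseudo log odds ratio'') $$\frac{1}{\eta_{ij}}\log\frac{p_{ij}\,p_{i+1,j+1}}{p_{i+1,j}\,p_{i,j+1}}$$ takes the same value for all $i,j\in\{1,\dots,n-1\}$.
   Context: An $n\times n$ checkerboard copula is a real $n\times n$ matrix $P=(p_{ij})$ with nonnegative entries whose row sums and column sums all equal $\frac1n$. Let $\Xi=(\xi_{ij})\in\mathbb{R}^{n\times n}$ with $\xi_{ij}=1$ if $i=j$, $\xi_{ij}=2$ if $i>j$, $\xi_{ij}=0$ if $i<j$. Kendall's $\tau$ of $P$ is $\tau(P)=1-\mathrm{tr}(\Xi P\Xi P^\top)$. Problem (P): minimize $I(P)=\sum_{i,j=1}^n p_{ij}\log p_{ij}$ (with $0\log 0=0$) over all $n\times n$ checkerboard copulas $P$ satisfying $1-\mathrm{tr}(\Xi P\Xi P^\top)=\mu$, where $\mu\in[0,1-\frac1n]$ is given. *)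

From HB Require Import structures.
From mathcomp Require Import all_boot all_order all_algebra.
From mathcomp Require Import all_classical all_reals all_analysis.
Set Implicit Arguments. Unset Strict Implicit. Unset Printing Implicit Defensive.
Import Order.TTheory GRing.Theory Num.Theory.
Local Open Scope ring_scope.

(* Indices are 0-based: 'I_n = {0,...,n-1} corresponds to {1,...,n}. *)

Definition checkerboard_copula (R : realType) (n : nat) (P : 'M[R]_n) : Prop :=
  (forall i j, 0 <= P i j) /\
  (forall i, \sum_(j < n) P i j = n%:R^-1) /\
  (forall j, \sum_(i < n) P i j = n%:R^-1).

Definition Xi (R : realType) (n : nat) : 'M[R]_n :=
  \matrix_(i < n, j < n)
    (if i == j then 1 else if (j < i)%N then 2 else 0).

Definition kendall_tau (R : realType) (n : nat) (P : 'M[R]_n) : R :=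
  1 - \tr (Xi R n *m P *m Xi R n *m P^T).

Definition xlogx (R : realType) (x : R) : R := if x == 0 then 0 else x * ln x.

Definition info (R : realType) (n : nat) (P : 'M[R]_n) : R :=
  \sum_(i < n) \sum_(j < n) xlogx (P i j).

Definition feasibleP (R : realType) (n : nat) (mu : R) (P : 'M[R]_n) : Prop :=
  checkerboard_copula P /\ kendall_tau P = mu.

Definition optimalP (R : realType) (n : nat) (mu : R) (P : 'M[R]_n) : Prop :=
  feasibleP mu P /\ forall Q : 'M[R]_n, feasibleP mu Q -> info P <= info Q.

(* Entry of P at nat indices (a,b), 0-based; only used for a, b < n. *)
Definition entry (R : realType) (n : nat) (P : 'M[R]_n) (a b : nat) : R :=
  match n return 'M[R]_n -> R with
  | 0 => fun _ => 0
  | m.+1 => fun Q => Q (inord a) (inord b)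
  end P.

Definition pseudo_log_odds (R : realType) (n : nat) (P : 'M[R]_n)
    (i j : nat) : R :=
  let p a b := entry P a b in
  (p i j + p i.+1 j + p i j.+1 + p i.+1 j.+1)^-1 *
  ln ((p i j * p i.+1 j.+1) / (p i.+1 j * p i j.+1)).

From HB Require Import structures.
From mathcomp Require Import all_boot all_order all_algebra.
From mathcomp Require Import all_classical all_reals all_analysis.
From mathcomp Require Import zify ring lra.
Set Implicit Arguments. Unset Strict Implicit. Unset Printing Implicit Defensive.
Import Order.TTheory GRing.Theory Num.Theory.
Local Open Scope ring_scope.
Local Open Scope classical_set_scope.

(* At a positive optimum the first-order (Lagrange) condition holds: if A has
   zero margins and the derivative of tau at P in direction A vanishes, pick B
   with zero margins along which tau strictly decreases; for small eps a
   correction d = O(eps^2) keeps tau(P + eps A + d B) = mu, and this competitor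
   has entropy I(P) + eps <ln P, A> + O(eps^2). Hence <ln P, A> >= 0, and the
   same for -A, so <ln P, .> is proportional to the derivative of tau on
   zero-margin matrices. For the 2x2 swap matrix at (i, j) the former is the
   log odds ratio and the latter is -2 eta_ij, which makes the pseudo log odds
   ratio the (common) Lagrange multiplier. *)

Section RealFacts.
Context {R : realType}.

Lemma xlogx_le_quadratic (x y : R) : 0 < x -> 0 < y ->
  xlogx y - xlogx x <= (ln x + 1) * (y - x) + (y - x) ^+ 2 / x.
Proof.
move=> x_gt0 y_gt0; rewrite /xlogx (gt_eqF x_gt0) (gt_eqF y_gt0).
have ln_ratio : ln y - ln x <= y / x - 1.
  have yx_gt0 : 0 < y / x by exact: divr_gt0.
  rewrite -ln_div ?posrE //; have := @le_ln1Dx R (y / x - 1).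
  by rewrite (addrC 1) subrK; apply; lra.
have : y * (ln y - ln x) <= y * (y / x - 1) by rewrite ler_pM2l.
have : y * (y / x - 1) - (y - x) = (y - x) ^+ 2 / x by field; rewrite gt_eqF.
lra.
Qed.

Lemma quadratic_small_root (a b c : R) : 0 < b -> 4 * a * c <= b ^+ 2 ->
  exists d, a * d ^+ 2 + b * d + c = 0 /\ `|d| <= 2 * `|c| / b.
Proof.
move=> b_gt0 disc_ge0; set s := Num.sqrt (b ^+ 2 - 4 * a * c).
have s_ge0 : 0 <= s := sqrtr_ge0 _.
have s_sqr : s ^+ 2 = b ^+ 2 - 4 * a * c by rewrite sqr_sqrtr // subr_ge0.
have bs_gt0 : 0 < b + s by lra.
exists (- 2 * c / (b + s)); split.
  apply: (mulfI (_ : (b + s) ^+ 2 != 0)); first by rewrite expf_neq0 // gt_eqF.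
  rewrite mulr0; transitivity (c * (4 * a * c - b ^+ 2 + s ^+ 2)).
    by field; rewrite gt_eqF.
  by rewrite s_sqr; ring.
rewrite normrM normfV normrM normrN (gtr0_norm bs_gt0) (ger0_norm (_ : 0 <= 2)) //.
by rewrite ler_wpM2l ?mulr_ge0 // lef_pV2 ?posrE //; lra.
Qed.

Lemma near0_linear_quadratic_ge0 (l K : R) :
  (\forall eps \near 0^'+, 0 <= eps * l + K * eps ^+ 2) -> 0 <= l.
Proof.
move=> ev_ge0; rewrite leNgt; apply/negP => l_lt0.
suff : \forall eps \near (0 : R)^'+, False by case/filter_ex.
have K1_gt0 : 0 < `|K| + 1 by rewrite ltr_pwDr.
near=> eps.
have eps_gt0 : 0 < eps by near: eps; exact: nbhs_right_gt.
have eps_small : eps < - l / (`|K| + 1).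
  by near: eps; apply: nbhs_right_lt; rewrite divr_gt0 //; lra.
have : 0 <= eps * l + K * eps ^+ 2 by near: eps.
have : K * eps ^+ 2 <= `|K| * eps ^+ 2 by rewrite ler_wpM2r ?sqr_ge0 ?ler_norm.
have : (`|K| + 1) * eps < - l by rewrite mulrC -ltr_pdivlMr.
rewrite expr2; nra.
Unshelve. all: by end_near.
Qed.

Lemma near0_mul_lt (x p : R) : 0 < p -> \forall eps \near 0^'+, eps * x < p.
Proof.
move=> p_gt0; have x1_gt0 : 0 < `|x| + 1 by rewrite ltr_pwDr.
near=> eps.
have eps_gt0 : 0 < eps by near: eps; exact: nbhs_right_gt.
have : eps * (`|x| + 1) < p.
  by rewrite -ltr_pdivlMr //; near: eps; apply: nbhs_right_lt; rewrite divr_gt0.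
have : eps * x <= eps * `|x| by apply: ler_wpM2l; rewrite ?ler_norm // ltW.
lra.
Unshelve. all: by end_near.
Qed.

Lemma near0_quadratic_small_root (a e c L : R) : 0 < L ->
  exists2 K, 0 <= K & \forall eps \near 0^'+, exists d,
    a * d ^+ 2 + (L + eps * e) * d + eps ^+ 2 * c = 0 /\ `|d| <= K * eps ^+ 2.
Proof.
move=> L_gt0; exists (4 * `|c| / L); first by rewrite divr_ge0 ?mulr_ge0 // ltW.
near=> eps.
have eps_gt0 : 0 < eps by near: eps; exact: nbhs_right_gt.
have eps_le1 : eps <= 1 by near: eps; exact: nbhs_right_le.
have eps_e : eps * `|e| < L / 2 by near: eps; apply: near0_mul_lt; lra.
have eps_ac : eps * (4 * (`|a| * `|c|)) < L ^+ 2 / 4.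
  by near: eps; apply: near0_mul_lt; rewrite divr_gt0 ?exprn_gt0.
set b := L + eps * e.
have b_ge : L / 2 <= b.
  have : - (eps * `|e|) <= eps * e.
    by rewrite -mulrN ler_pM2l //; exact: lerNnormlW.
  rewrite /b; lra.
have b_gt0 : 0 < b by lra.
have disc_ge0 : 4 * a * (eps ^+ 2 * c) <= b ^+ 2.
  have : 4 * a * (eps ^+ 2 * c) <= eps ^+ 2 * (4 * (`|a| * `|c|)).
    have : a * c <= `|a| * `|c| by rewrite -normrM ler_norm.
    have := sqr_ge0 eps; nra.
  have : eps ^+ 2 * (4 * (`|a| * `|c|)) <= eps * (4 * (`|a| * `|c|)).
    by apply: ler_wpM2r; rewrite ?mulr_ge0 // expr2 ger_pMl.
  have : L ^+ 2 / 4 <= b ^+ 2.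
    have : (L / 2) ^+ 2 <= b ^+ 2 by rewrite ler_sqr ?nnegrE; lra.
    by rewrite expr_div_n; lra.
  lra.
have [d [root d_small]] := quadratic_small_root b_gt0 disc_ge0.
exists d; split => //; apply: (le_trans d_small).
have -> : `|eps ^+ 2 * c| = eps ^+ 2 * `|c| by rewrite normrM ger0_norm ?sqr_ge0.
have -> : 2 * (eps ^+ 2 * `|c|) = 4 * `|c| / L * eps ^+ 2 * (L / 2).
  by field; rewrite gt_eqF.
rewrite ler_pdivrMr //; apply: ler_wpM2l => //.
by rewrite mulr_ge0 ?sqr_ge0 // divr_ge0 ?mulr_ge0 // ltW.
Unshelve. all: by end_near.
Qed.

End RealFacts.

Section KendallForm.
Context {R : realType} {n : nat}.
Implicit Types (M N P H : 'M[R]_n).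

Definition kendall_form M N := \tr (Xi R n *m M *m Xi R n *m N^T).

Definition kendall_lin P H := kendall_form P H + kendall_form H P.

Definition log_pairing P M := \sum_(a < n) \sum_(b < n) ln (P a b) * M a b.

Definition zero_margins M :=
  (forall a, \sum_(b < n) M a b = 0) /\ (forall b, \sum_(a < n) M a b = 0).

Lemma kendall_formDl M1 M2 N :
  kendall_form (M1 + M2) N = kendall_form M1 N + kendall_form M2 N.
Proof. by rewrite /kendall_form mulmxDr !mulmxDl mxtraceD. Qed.

Lemma kendall_formZl c M N : kendall_form (c *: M) N = c * kendall_form M N.
Proof. by rewrite /kendall_form -scalemxAr -!scalemxAl mxtraceZ. Qed.

Lemma kendall_formDr M N1 N2 :
  kendall_form M (N1 + N2) = kendall_form M N1 + kendall_form M N2.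
Proof. by rewrite /kendall_form linearD /= mulmxDr mxtraceD. Qed.

Lemma kendall_formZr c M N : kendall_form M (c *: N) = c * kendall_form M N.
Proof. by rewrite /kendall_form linearZ /= -scalemxAr mxtraceZ. Qed.

Lemma kendall_tauD P H :
  kendall_tau (P + H) = kendall_tau P - kendall_lin P H - kendall_form H H.
Proof.
rewrite /kendall_tau /kendall_lin -!/(kendall_form _ _).
rewrite !kendall_formDl !kendall_formDr; ring.
Qed.

Lemma kendall_linD P M N :
  kendall_lin P (M + N) = kendall_lin P M + kendall_lin P N.
Proof. by rewrite /kendall_lin kendall_formDl kendall_formDr; ring. Qed.

Lemma kendall_linZ P c M : kendall_lin P (c *: M) = c * kendall_lin P M.
Proof. by rewrite /kendall_lin kendall_formZl kendall_formZr mulrDr. Qed.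

Lemma log_pairingD P M N :
  log_pairing P (M + N) = log_pairing P M + log_pairing P N.
Proof.
rewrite /log_pairing -big_split; apply: eq_bigr => a _.
by rewrite -big_split; apply: eq_bigr => b _; rewrite mxE mulrDr.
Qed.

Lemma log_pairingZ P c M : log_pairing P (c *: M) = c * log_pairing P M.
Proof.
rewrite /log_pairing mulr_sumr; apply: eq_bigr => a _.
by rewrite mulr_sumr; apply: eq_bigr => b _; rewrite mxE mulrCA.
Qed.

Lemma zero_marginsD M N :
  zero_margins M -> zero_margins N -> zero_margins (M + N).
Proof.
move=> [Mr Mc] [Nr Nc]; split=> [a|b].
  by under eq_bigr => b _ do rewrite mxE; rewrite big_split /= Mr Nr addr0.
by under eq_bigr => a _ do rewrite mxE; rewrite big_split /= Mc Nc addr0.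
Qed.

Lemma zero_marginsZ c M : zero_margins M -> zero_margins (c *: M).
Proof.
move=> [Mr Mc]; split=> [a|b].
  by under eq_bigr => b _ do rewrite mxE; rewrite -mulr_sumr Mr mulr0.
by under eq_bigr => a _ do rewrite mxE; rewrite -mulr_sumr Mc mulr0.
Qed.

Lemma zero_margins_sum M : zero_margins M -> \sum_(a < n) \sum_(b < n) M a b = 0.
Proof. by case=> Mr _; apply: big1 => a _; exact: Mr. Qed.

Lemma info_perturb_le P H :
  (forall a b, 0 < P a b) -> (forall a b, 0 < P a b + H a b) ->
  info (P + H) - info P <= log_pairing P H + \sum_(a < n) \sum_(b < n) H a b
                           + \sum_(a < n) \sum_(b < n) H a b ^+ 2 / P a b.
Proof.
move=> P_gt0 PH_gt0; rewrite /info /log_pairing -!big_split -sumrB /=.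
apply: ler_sum => a _; rewrite -!big_split -sumrB /=; apply: ler_sum => b _.
have := xlogx_le_quadratic (P_gt0 a b) (PH_gt0 a b).
rewrite mxE (addrC (P a b)) addrK; lra.
Qed.

Lemma feasibleP_perturb mu P H : feasibleP mu P -> zero_margins H ->
  (forall a b, 0 <= P a b + H a b) -> kendall_tau (P + H) = kendall_tau P ->
  feasibleP mu (P + H).
Proof.
move=> [[_ [Pr Pc]] tauP] [Hr Hc] PH_ge0 tauPH; split; last by rewrite tauPH.
split; first by move=> a b; rewrite mxE.
split=> [a|b].
  by under eq_bigr => b _ do rewrite mxE; rewrite big_split /= Pr Hr addr0.
by under eq_bigr => a _ do rewrite mxE; rewrite big_split /= Pc Hc addr0.
Qed.

End KendallForm.

Section Optimality.
Context {R : realType} {n : nat}.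
Implicit Types (P A B : 'M[R]_n).

Lemma kendall_tau_correction P A B :
  kendall_lin P A = 0 -> 0 < kendall_lin P B ->
  exists2 K, 0 <= K & \forall eps \near 0^'+, exists d,
    `|d| <= K * eps ^+ 2 /\ kendall_tau (P + (eps *: A + d *: B)) = kendall_tau P.
Proof.
move=> linA linB_gt0.
have [K K_ge0 small_root] := near0_quadratic_small_root (kendall_form B B)
  (kendall_form A B + kendall_form B A) (kendall_form A A) linB_gt0.
exists K => //; apply: filterS small_root => eps [d [root d_small]].
exists d; split => //.
rewrite kendall_tauD kendall_linD !kendall_linZ linA mulr0 add0r.
rewrite !kendall_formDl !kendall_formDr !kendall_formZl !kendall_formZr.
lra.
Qed.

Lemma optimal_log_pairing_ge0 mu P A B :
  optimalP mu P -> (forall a b, 0 < P a b) ->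
  zero_margins A -> zero_margins B ->
  kendall_lin P A = 0 -> 0 < kendall_lin P B -> 0 <= log_pairing P A.
Proof.
move=> [feasP optP] P_gt0 zA zB linA linB.
have [K K_ge0 correction] := kendall_tau_correction linA linB.
pose X a b : R := `|A a b| + K * `|B a b|.
pose S : R := \sum_(a < n) \sum_(b < n) X a b ^+ 2 / P a b.
apply: (near0_linear_quadratic_ge0 (K := K * `|log_pairing P B| + S)).
near=> eps.
have eps_gt0 : 0 < eps by near: eps; exact: nbhs_right_gt.
have eps_le1 : eps <= 1 by near: eps; exact: nbhs_right_le.
have X_lt : forall a b, eps * X a b < P a b.
  by near: eps; apply: filter_forall => a; apply: filter_forall => b;
    exact: near0_mul_lt.
have [d [d_small tau_eq]] : exists d, `|d| <= K * eps ^+ 2 /\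
    kendall_tau (P + (eps *: A + d *: B)) = kendall_tau P by near: eps.
set H := eps *: A + d *: B.
have H_small a b : `|H a b| <= eps * X a b.
  rewrite !mxE (le_trans (ler_normD _ _)) // !normrM (gtr0_norm eps_gt0).
  rewrite /X mulrDr lerD2l mulrCA mulrA; apply: ler_wpM2r => //.
  by apply: (le_trans d_small); apply: ler_wpM2l; rewrite // expr2 ger_pMl.
have PH_gt0 a b : 0 < P a b + H a b.
  by have := X_lt a b; have := lerNnormlW (H_small a b); lra.
have feasPH : feasibleP mu (P + H).
  apply: feasibleP_perturb => // [|a b]; last exact: ltW.
  by apply: zero_marginsD; apply: zero_marginsZ.
have quad_le : \sum_(a < n) \sum_(b < n) H a b ^+ 2 / P a b <= eps ^+ 2 * S.
  rewrite /S !mulr_sumr; apply: ler_sum => a _; rewrite mulr_sumr.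
  apply: ler_sum => b _; rewrite mulrA; apply: ler_wpM2r.
    by rewrite invr_ge0 ltW.
  rewrite -exprMn -real_normK ?num_real // ler_sqr ?nnegrE //.
  by rewrite mulr_ge0 ?addr_ge0 ?mulr_ge0 // ltW.
have lin_le : d * log_pairing P B <= K * eps ^+ 2 * `|log_pairing P B|.
  by apply: (le_trans (ler_norm _)); rewrite normrM; apply: ler_wpM2r.
have := optP _ feasPH; have := info_perturb_le P_gt0 PH_gt0.
rewrite zero_margins_sum; last by apply: zero_marginsD; apply: zero_marginsZ.
rewrite log_pairingD !log_pairingZ; lra.
Unshelve. all: by end_near.
Qed.

Lemma optimal_log_pairing_proportional mu P D1 D2 :
  optimalP mu P -> (forall a b, 0 < P a b) ->
  zero_margins D1 -> zero_margins D2 -> kendall_lin P D1 != 0 ->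
  kendall_lin P D2 * log_pairing P D1 = kendall_lin P D1 * log_pairing P D2.
Proof.
move=> optP P_gt0 z1 z2 lin1_neq0.
set L1 := kendall_lin P D1; set L2 := kendall_lin P D2.
have zB : zero_margins (L1 *: D1) by exact: zero_marginsZ.
have linB : 0 < kendall_lin P (L1 *: D1).
  by rewrite kendall_linZ -expr2 exprn_even_gt0 //= lin1_neq0.
have zA s : zero_margins (s *: (L2 *: D1 + (- L1) *: D2)).
  by apply: zero_marginsZ; apply: zero_marginsD; apply: zero_marginsZ.
have linA s : kendall_lin P (s *: (L2 *: D1 + (- L1) *: D2)) = 0.
  by rewrite kendall_linZ kendall_linD !kendall_linZ -/L1 -/L2 mulNr (mulrC L2) subrr mulr0.
have := optimal_log_pairing_ge0 optP P_gt0 (zA 1) zB (linA 1) linB.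
have := optimal_log_pairing_ge0 optP P_gt0 (zA (-1)) zB (linA (-1)) linB.
rewrite !log_pairingZ log_pairingD !log_pairingZ; lra.
Qed.
End Optimality.

Section AdjacentSwap.
Context {R : realType} {m : nat}.
Local Notation n := m.+1.

Definition xi (a b : nat) : R := if a == b then 1 else if (b < a)%N then 2 else 0.

Definition ind_diff (a i : nat) : R := (a == i)%:R - (a == i.+1)%:R.
Definition ind_sum (a i : nat) : R := (a == i)%:R + (a == i.+1)%:R.

Definition diff_col i : 'cV[R]_n := \col_a ind_diff a i.
Definition swap_mx i j : 'M[R]_n := diff_col i *m (diff_col j)^T.

Definition block_sum (N : 'M[R]_n) i j :=
  N (inord i) (inord j) + N (inord i.+1) (inord j)
  + N (inord i) (inord j.+1) + N (inord i.+1) (inord j.+1).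

Lemma XiE (a b : 'I_n) : Xi R n a b = xi a b.
Proof. by rewrite mxE. Qed.

Lemma xiBr a i : xi a i - xi a i.+1 = ind_sum a i.
Proof.
rewrite /xi /ind_sum.
case: (a == i) / eqP => ?; case: (a == i.+1) / eqP => ?;
  case: (i < a)%N / idP => ?; case: (i.+1 < a)%N / idP => ?;
  rewrite /= ?addr0 ?add0r ?subr0 ?sub0r; try (exfalso; lia); ring.
Qed.

Lemma xiBl b i : xi i b - xi i.+1 b = - ind_sum b i.
Proof.
rewrite /xi /ind_sum (eq_sym i) (eq_sym i.+1).
case: (b == i) / eqP => ?; case: (b == i.+1) / eqP => ?;
  case: (b < i)%N / idP => ?; case: (b < i.+1)%N / idP => ?;
  rewrite /= ?addr0 ?add0r ?subr0 ?sub0r; try (exfalso; lia); ring.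
Qed.

Lemma swap_mxE i j a b : swap_mx i j a b = ind_diff a i * ind_diff b j.
Proof. by rewrite !mxE big_ord1 !mxE. Qed.

Lemma sum_ind_eq (F : 'I_n -> R) i : (i < n)%N ->
  \sum_(a < n) F a * ((a : nat) == i)%:R = F (inord i).
Proof.
move=> lt_in; rewrite (bigD1 (inord i)) //= inordK // eqxx mulr1 big1 ?addr0 //.
move=> a /eqP a_neq; case: eqP => [a_eq|_]; last by rewrite mulr0.
by case: a_neq; apply: val_inj; rewrite /= inordK.
Qed.

Lemma sum_ind_diff (F : 'I_n -> R) i : (i.+1 < n)%N ->
  \sum_(a < n) F a * ind_diff a i = F (inord i) - F (inord i.+1).
Proof.
move=> lt_in; under eq_bigr => a _ do rewrite mulrBr.
by rewrite sumrB !sum_ind_eq // ltnW.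
Qed.

Lemma sum_ind_sum (F : 'I_n -> R) i : (i.+1 < n)%N ->
  \sum_(a < n) F a * ind_sum a i = F (inord i) + F (inord i.+1).
Proof.
move=> lt_in; under eq_bigr => a _ do rewrite mulrDr.
by rewrite big_split /= !sum_ind_eq // ltnW.
Qed.

Lemma Xi_diff_col i : (i.+1 < n)%N -> Xi R n *m diff_col i = \col_a ind_sum a i.
Proof.
move=> lt_in; apply/colP => a; rewrite !mxE.
under eq_bigr => b _ do rewrite XiE mxE.
by rewrite (sum_ind_diff (xi a)) // !inordK ?xiBr // ltnW.
Qed.

Lemma diff_row_Xi j : (j.+1 < n)%N ->
  (diff_col j)^T *m Xi R n = - (\col_b ind_sum b j)^T.
Proof.
move=> lt_jn; apply/rowP => b; rewrite !mxE.
under eq_bigr => a _ do rewrite XiE !mxE mulrC.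
by rewrite (sum_ind_diff (xi^~ b)) // !inordK ?xiBl // ltnW.
Qed.

Lemma mxtrace_quadratic (u v : 'cV[R]_n) (M : 'M[R]_n) :
  \tr (u^T *m M *m v) = \sum_(a < n) \sum_(b < n) u a 0 * M a b * v b 0.
Proof.
rewrite trace_mx11 mxE exchange_big; apply: eq_bigr => b _.
by rewrite mxE mulr_suml; apply: eq_bigr => a _; rewrite !mxE.
Qed.

Lemma block_sumE (N : 'M[R]_n) i j : (i.+1 < n)%N -> (j.+1 < n)%N ->
  \sum_(a < n) \sum_(b < n) ind_sum a i * N a b * ind_sum b j = block_sum N i j.
Proof.
move=> lt_in lt_jn; under eq_bigr => a _ do rewrite (sum_ind_sum (fun b => _ * N a b)) //.
under eq_bigr => a _ do rewrite -mulrDr mulrC.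
by rewrite sum_ind_sum // /block_sum; ring.
Qed.

Lemma kendall_form_swapl (N : 'M[R]_n) i j : (i.+1 < n)%N -> (j.+1 < n)%N ->
  kendall_form (swap_mx i j) N = - block_sum N i j.
Proof.
move=> lt_in lt_jn; rewrite /kendall_form /swap_mx !mulmxA.
rewrite -(mulmxA _ _ (Xi R n)) Xi_diff_col // diff_row_Xi //.
rewrite mulmxN mulNmx raddfN /= -mulmxA (mxtrace_mulC (\col_a ind_sum a i)).
rewrite mxtrace_quadratic exchange_big -(block_sumE N lt_in lt_jn); congr (- _).
apply: eq_bigr => a _; apply: eq_bigr => b _; rewrite !mxE; ring.
Qed.

Lemma kendall_form_swapr (N : 'M[R]_n) i j : (i.+1 < n)%N -> (j.+1 < n)%N ->
  kendall_form N (swap_mx i j) = - block_sum N i j.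
Proof.
move=> lt_in lt_jn; rewrite /kendall_form /swap_mx trmx_mul trmxK !mulmxA.
rewrite (mxtrace_mulC (Xi R n *m N *m Xi R n *m diff_col j)) !mulmxA.
rewrite diff_row_Xi // -mulmxA Xi_diff_col // !mulNmx raddfN /=.
rewrite mxtrace_quadratic -(block_sumE N lt_in lt_jn).
by congr (- _); apply: eq_bigr => a _; apply: eq_bigr => b _; rewrite !mxE.
Qed.

Lemma kendall_lin_swap (P : 'M[R]_n) i j : (i.+1 < n)%N -> (j.+1 < n)%N ->
  kendall_lin P (swap_mx i j) = - 2 * block_sum P i j.
Proof.
by move=> lt_in lt_jn; rewrite /kendall_lin kendall_form_swapl ?kendall_form_swapr //; ring.
Qed.

Lemma log_pairing_swap (P : 'M[R]_n) i j : (i.+1 < n)%N -> (j.+1 < n)%N ->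
  log_pairing P (swap_mx i j) =
    ln (P (inord i) (inord j)) - ln (P (inord i) (inord j.+1))
    - (ln (P (inord i.+1) (inord j)) - ln (P (inord i.+1) (inord j.+1))).
Proof.
move=> lt_in lt_jn; rewrite /log_pairing.
under eq_bigr => a _ do under eq_bigr => b _ do rewrite swap_mxE mulrA mulrAC.
under eq_bigr => a _ do rewrite -mulr_suml.
by rewrite (sum_ind_diff (fun a => \sum_b _)) // !(sum_ind_diff (fun b => ln (P _ b))).
Qed.

Lemma zero_margins_swap i j : (i.+1 < n)%N -> (j.+1 < n)%N ->
  zero_margins (swap_mx i j).
Proof.
move=> lt_in lt_jn; split=> [a|b].
  under eq_bigr => b _ do rewrite swap_mxE -[ind_diff b j]mul1r.
  by rewrite -mulr_sumr (sum_ind_diff (fun=> 1)) // subrr mulr0.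
under eq_bigr => a _ do rewrite swap_mxE mulrC -[ind_diff a i]mul1r.
by rewrite -mulr_sumr (sum_ind_diff (fun=> 1)) // subrr mulr0.
Qed.

Lemma pseudo_log_oddsE (P : 'M[R]_n) i j : (forall a b, 0 < P a b) ->
  (i.+1 < n)%N -> (j.+1 < n)%N ->
  pseudo_log_odds P i j = log_pairing P (swap_mx i j) / block_sum P i j.
Proof.
move=> P_gt0 lt_in lt_jn; rewrite /pseudo_log_odds /entry /= mulrC.
rewrite log_pairing_swap // ln_div ?posrE ?mulr_gt0 // !lnM ?posrE //.
by congr (_ / _); lra.
Qed.

End AdjacentSwap.

Theorem theorem3 (R : realType) (n : nat) (mu : R) (P : 'M[R]_n) :
  (2 <= n)%N ->
  0 <= mu -> mu <= 1 - n%:R^-1 ->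
  optimalP mu P ->
  (forall i j, 0 < P i j) ->
  forall i j k l : nat,
    (i.+1 < n)%N -> (j.+1 < n)%N -> (k.+1 < n)%N -> (l.+1 < n)%N ->
    pseudo_log_odds P i j = pseudo_log_odds P k l.
Proof.
case: n P => [//|m] P _ _ _ optP P_gt0 i j k l lt_in lt_jn lt_kn lt_ln.
have block_neq0 a b : block_sum P a b != 0 by rewrite gt_eqF // !addr_gt0.
have lin_neq0 : kendall_lin P (swap_mx i j) != 0.
  by rewrite kendall_lin_swap // mulf_neq0 ?oppr_eq0.
have := optimal_log_pairing_proportional optP P_gt0
  (zero_margins_swap lt_in lt_jn) (zero_margins_swap lt_kn lt_ln) lin_neq0.
rewrite !kendall_lin_swap // !pseudo_log_oddsE // => proportional.
by apply/eqP; rewrite eqr_div //; apply/eqP; lra.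
Qed.
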